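(* For every $\kappa\in(0,1)$ the function $H_\kappa$ is smooth and $$H_\kappa(x)=1+\frac{x^2}{2(1-\kappa)^2}+o\Big(\frac{x^2}{(1-\kappa)^2}\Big)\quad(x\to0),\qquad H_\kappa(x)=x+\kappa\ln x+\kappa^2\frac{\ln x}{x}+\mathcal O(1)\quad(x\to\infty).$$
   Context: For $\kappa\in(0,1)$ let $G_\kappa:[1,\infty)\to[0,\infty)$, $G_\kappa(x)=\sqrt{x^2-1}-\kappa\ln(x+\sqrt{x^2-1})$, which is a strictly increasing bijection, and $H_\kappa=G_\kappa^{-1}:[0,\infty)\to[1,\infty)$. *)

From Stdlib Require Import Reals Lra ClassicalEpsilon.
From Coquelicot Require Import Coquelicot.
Open Scope R_scope.

Definition Gk (k x : R) : R :=
  sqrt (x ^ 2 - 1) - k * ln (x + sqrt (x ^ 2 - 1)).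

(* H_kappa = G_kappa^{-1} : [0,oo) -> [1,oo).  For y >= 0 this is the unique
   x >= 1 with G_kappa x = y (G_kappa is a strictly increasing bijection
   [1,oo) -> [0,oo) for kappa in (0,1)); outside [0,oo) the value is
   irrelevant (an arbitrary choice). *)
Definition Hk (k y : R) : R :=
  epsilon (inhabits 1) (fun x => 1 <= x /\ Gk k x = y).

(* Substituting x = cosh t turns G_k into phi t = sinh t - k t, whose derivative
   cosh t - k is at least 1 - k > 0; so phi is a diffeomorphism of R and
   H_k = cosh o phi^-1 on [0, oo).  Since (phi^-1)' = 1/(cosh - k) o phi^-1, every
   derivative of cosh o phi^-1 is a polynomial in cosh, sinh and 1/(cosh - k)
   composed with phi^-1, hence smoothness.  At 0 we have H(0) = 1, H'(0) = 0 and
   H''(0) = 1/(1-k)^2, and Taylor's formula with a continuous second derivative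
   gives the expansion.  At infinity, t = phi^-1(x) satisfies cosh t = x + e^-t + k t
   and ln x < t <= ln x + ln 8 once t >= 8, so H(x) - x - k ln x is bounded; the
   term k^2 ln x / x is bounded as well. *)

From Stdlib Require Import Reals Lra Psatz ClassicalEpsilon.
From Coquelicot Require Import Coquelicot.
Open Scope R_scope.

Lemma exp_mul_exp_opp t : exp t * exp (- t) = 1.
Proof. rewrite <- exp_plus, Rplus_opp_r; exact exp_0. Qed.

Lemma cosh_pos t : 0 < cosh t.
Proof. unfold cosh; pose proof (exp_pos t); pose proof (exp_pos (- t)); lra. Qed.

Lemma cosh_sqr_sub_sinh_sqr t : cosh t ^ 2 - sinh t ^ 2 = 1.
Proof. unfold cosh, sinh; pose proof (exp_mul_exp_opp t); nra. Qed.

Lemma cosh_ge_1 t : 1 <= cosh t.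
Proof. pose proof (cosh_pos t); pose proof (cosh_sqr_sub_sinh_sqr t); nra. Qed.

Lemma cosh_add_sinh t : cosh t + sinh t = exp t.
Proof. unfold cosh, sinh; field. Qed.

Lemma cosh_sub_sinh t : cosh t - sinh t = exp (- t).
Proof. unfold cosh, sinh; field. Qed.

Lemma sinh_ge_0 t : 0 <= t -> 0 <= sinh t.
Proof.
  intros [ht | <-]; [| rewrite sinh_0; lra].
  rewrite <- sinh_0; left; apply sinh_lt, ht.
Qed.

Lemma cosh_surjective x : 1 <= x -> exists s, 0 <= s /\ cosh s = x.
Proof.
  intros hx; set (s := arcsinh (sqrt (x ^ 2 - 1))).
  assert (hsinh : sinh s ^ 2 = x ^ 2 - 1) by (unfold s; rewrite sinh_arcsinh; apply pow2_sqrt; nra).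
  exists s; split.
  - rewrite <- arcsinh_0; apply arcsinh_le, sqrt_pos.
  - pose proof (cosh_pos s); pose proof (cosh_sqr_sub_sinh_sqr s); nra.
Qed.

Lemma is_derive_cosh t : is_derive cosh t (sinh t).
Proof. apply is_derive_Reals, derivable_pt_lim_cosh. Qed.

Lemma is_derive_sinh t : is_derive sinh t (cosh t).
Proof. apply is_derive_Reals, derivable_pt_lim_sinh. Qed.

Lemma is_derive_cosh_sub k t : is_derive (fun t => cosh t - k) t (sinh t).
Proof.
  apply is_derive_Reals; rewrite <- (Rminus_0_r (sinh t)).
  apply (derivable_pt_lim_minus cosh (fct_cte k));
    [apply derivable_pt_lim_cosh | apply derivable_pt_lim_const].
Qed.

Section PhiInverse.

Variable k : R.
Hypothesis hk1 : k < 1.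

(* G_k in the coordinate x = cosh t (see Gk_cosh), extended to all t in R so
   that its inverse is a globally smooth function. *)
Definition phi (t : R) : R := sinh t - k * t.

Lemma Gk_cosh t : 0 <= t -> Gk k (cosh t) = phi t.
Proof.
  intros ht; unfold Gk, phi.
  replace (cosh t ^ 2 - 1) with (sinh t ^ 2) by (pose proof (cosh_sqr_sub_sinh_sqr t); lra).
  rewrite sqrt_pow2 by (apply sinh_ge_0, ht).
  rewrite cosh_add_sinh, ln_exp; reflexivity.
Qed.

Lemma is_derive_phi t : is_derive phi t (cosh t - k).
Proof.
  apply (is_derive_minus sinh (fun t => k * t)); [apply is_derive_sinh |].
  auto_derive; [exact I | ring].
Qed.

Definition derivable_phi : derivable phi :=
  fun t => exist _ (cosh t - k) (proj1 (is_derive_Reals _ _ _) (is_derive_phi t)).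

Lemma phi_0 : phi 0 = 0.
Proof. unfold phi; rewrite sinh_0; ring. Qed.

Lemma phi_sub_ge a b : a <= b -> (1 - k) * (b - a) <= phi b - phi a.
Proof.
  intros hab.
  destruct (MVT_gen phi a b (fun t => cosh t - k)) as [c [_ ->]].
  - intros t _; apply is_derive_phi.
  - intros t _; apply derivable_continuous_pt, derivable_phi.
  - pose proof (cosh_ge_1 c); nra.
Qed.

Lemma phi_injective a b : phi a = phi b -> a = b.
Proof.
  intros hab; destruct (Rle_lt_dec a b) as [h | h].
  - pose proof (phi_sub_ge a b h); nra.
  - pose proof (phi_sub_ge b a (Rlt_le _ _ h)); nra.
Qed.

Lemma phi_surjective y : exists t, phi t = y.
Proof.
  set (b := Rabs y / (1 - k)).
  assert (hb : (1 - k) * b = Rabs y) by (unfold b; field; lra).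
  assert (hb0 : 0 <= b) by (pose proof (Rabs_pos y); nra).
  pose proof (phi_sub_ge 0 b hb0) as hphib.
  pose proof (phi_sub_ge (- b) 0 ltac:(lra)) as hphia.
  rewrite phi_0 in hphia, hphib.
  destruct (IVT_gen phi (- b) b y (derivable_continuous _ derivable_phi)) as [t [_ ht]].
  - pose proof (Rle_abs y); pose proof (Rle_abs (- y)); rewrite Rabs_Ropp in *.
    split; [apply Rle_trans with (phi (- b)); [apply Rmin_l | lra]
           | apply Rle_trans with (phi b); [lra | apply Rmax_r]].
  - exists t; exact ht.
Qed.

Definition phi_inv (y : R) : R := epsilon (inhabits 0) (fun t => phi t = y).

Lemma phi_phi_inv y : phi (phi_inv y) = y.
Proof. apply (epsilon_spec (inhabits 0) (fun t => phi t = y)), phi_surjective. Qed.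

Lemma phi_inv_phi t : phi_inv (phi t) = t.
Proof. apply phi_injective, phi_phi_inv. Qed.

Lemma phi_inv_0 : phi_inv 0 = 0.
Proof. rewrite <- phi_0 at 1; apply phi_inv_phi. Qed.

Lemma phi_inv_sub_le x y : x <= y -> 0 <= phi_inv y - phi_inv x <= (y - x) / (1 - k).
Proof.
  intros hxy.
  destruct (Rle_lt_dec (phi_inv x) (phi_inv y)) as [h | h].
  - pose proof (phi_sub_ge _ _ h) as hge; rewrite !phi_phi_inv in hge.
    split; [lra |]; apply Rmult_le_reg_l with (1 - k); [lra |].
    field_simplify; lra.
  - pose proof (phi_sub_ge _ _ (Rlt_le _ _ h)) as hge; rewrite !phi_phi_inv in hge; nra.
Qed.

Lemma phi_inv_ge_0 y : 0 <= y -> 0 <= phi_inv y.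
Proof. intros hy; pose proof (phi_inv_sub_le 0 y hy); rewrite phi_inv_0 in *; lra. Qed.

Lemma continuity_phi_inv : continuity phi_inv.
Proof.
  intros y eps heps; exists (eps * (1 - k)); split; [nra |].
  intros x [_ hx]; simpl in *; unfold R_dist in *.
  destruct (Rle_lt_dec y x) as [h | h].
  - pose proof (phi_inv_sub_le y x h).
    rewrite !Rabs_right in * by lra.
    apply Rle_lt_trans with ((x - y) / (1 - k)); [lra |].
    apply Rmult_lt_reg_r with (1 - k); [lra | field_simplify; lra].
  - pose proof (phi_inv_sub_le x y (Rlt_le _ _ h)).
    rewrite !Rabs_left1 in * by lra.
    apply Rle_lt_trans with ((y - x) / (1 - k)); [lra |].
    apply Rmult_lt_reg_r with (1 - k); [lra | field_simplify; lra].
Qed.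

Lemma is_derive_phi_inv y : is_derive phi_inv y (/ (cosh (phi_inv y) - k)).
Proof.
  assert (hmono : phi_inv (y - 1) <= phi_inv y <= phi_inv (y + 1)).
  { pose proof (phi_inv_sub_le (y - 1) y ltac:(lra)).
    pose proof (phi_inv_sub_le y (y + 1) ltac:(lra)); lra. }
  pose proof (cosh_ge_1 (phi_inv y)).
  apply is_derive_Reals.
  replace (/ (cosh (phi_inv y) - k)) with (1 / (cosh (phi_inv y) - k)) by (field; lra).
  apply (Ranalysis5.derivable_pt_lim_recip_interv phi phi_inv (y - 1) (y + 1) y
           (fun a _ => derivable_phi a) (continuity_phi_inv y) ltac:(lra) ltac:(lra) hmono).
  - intros x _; apply phi_phi_inv.
  - simpl; lra.
Qed.

Definition cosh_phi_inv (y : R) : R := cosh (phi_inv y).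

Lemma Hk_eq_cosh_phi_inv y : 0 <= y -> Hk k y = cosh_phi_inv y.
Proof.
  intros hy.
  assert (hex : exists x, 1 <= x /\ Gk k x = y).
  { exists (cosh (phi_inv y)); split; [apply cosh_ge_1 |].
    rewrite Gk_cosh by (apply phi_inv_ge_0, hy); apply phi_phi_inv. }
  unfold Hk; destruct (epsilon_spec (inhabits 1) _ hex) as [hx hGx].
  destruct (cosh_surjective _ hx) as [s [hs0 hs]].
  rewrite <- hs in hGx |- *; rewrite Gk_cosh in hGx by exact hs0.
  rewrite <- hGx; unfold cosh_phi_inv; rewrite phi_inv_phi; reflexivity.
Qed.

End PhiInverse.

Definition derive_closed (C : (R -> R) -> Prop) : Prop :=
  forall u, C u -> exists u', C u' /\ forall x, is_derive u x (u' x).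

Lemma derive_closed_ex_derive_n C :
  derive_closed C -> forall u, C u -> forall n x, ex_derive_n u n x.
Proof.
  intros hC.
  assert (hD : forall n u, C u -> exists v, C v /\ forall x, Derive_n u n x = v x).
  { induction n as [| n IH]; intros u hu; [exists u; split; auto |].
    destruct (IH u hu) as [v [hv hDv]]; destruct (hC v hv) as [v' [hv' hvv']].
    exists v'; split; [exact hv' | intros x; simpl].
    rewrite (Derive_ext _ _ x hDv); apply is_derive_unique, hvv'. }
  intros u hu [| n] x; simpl; [exact I |].
  destruct (hD n u hu) as [v [hv hDv]]; destruct (hC v hv) as [v' [_ hvv']].
  apply (ex_derive_ext v); [intros t; symmetry; apply hDv | exists (v' x); apply hvv'].
Qed.

(* Every derivative of cosh o phi_inv is f o phi_inv for some f in this algebra. *)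
Inductive hyp_poly (k : R) : (R -> R) -> Prop :=
  | hyp_poly_const c : hyp_poly k (fun _ => c)
  | hyp_poly_cosh : hyp_poly k cosh
  | hyp_poly_sinh : hyp_poly k sinh
  | hyp_poly_inv : hyp_poly k (fun t => / (cosh t - k))
  | hyp_poly_plus f g : hyp_poly k f -> hyp_poly k g -> hyp_poly k (fun t => f t + g t)
  | hyp_poly_mult f g : hyp_poly k f -> hyp_poly k g -> hyp_poly k (fun t => f t * g t).

Lemma derive_closed_hyp_poly k : k < 1 -> derive_closed (hyp_poly k).
Proof.
  intros hk1 u hu; induction hu as [c | | | | f g hf [f' [hf' df]] hg [g' [hg' dg]]
                                   | f g hf [f' [hf' df]] hg [g' [hg' dg]]].
  - exists (fun _ => 0); split; [apply hyp_poly_const | intros t; apply (is_derive_const c t)].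
  - exists sinh; split; [constructor | apply is_derive_cosh].
  - exists cosh; split; [constructor | apply is_derive_sinh].
  - exists (fun t => -1 * (sinh t * (/ (cosh t - k) * / (cosh t - k)))).
    split; [repeat constructor |].
    intros t; pose proof (cosh_ge_1 t).
    replace (-1 * _) with (- sinh t / (cosh t - k) ^ 2) by (field; lra).
    apply (is_derive_inv (fun t => cosh t - k)); [apply is_derive_cosh_sub | lra].
  - exists (fun t => f' t + g' t); split; [constructor; assumption |].
    intros t; apply is_derive_Reals, (derivable_pt_lim_plus f g); apply is_derive_Reals; auto.
  - exists (fun t => f' t * g t + f t * g' t); split; [repeat constructor; assumption |].
    intros t; apply is_derive_Reals, (derivable_pt_lim_mult f g); apply is_derive_Reals; auto.
Qed.

Lemma derive_closed_hyp_poly_comp_phi_inv k : k < 1 ->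
  derive_closed (fun u => exists f, hyp_poly k f /\ forall y, u y = f (phi_inv k y)).
Proof.
  intros hk1 u [f [hf hu]].
  destruct (derive_closed_hyp_poly k hk1 f hf) as [f' [hf' df]].
  exists (fun y => f' (phi_inv k y) * / (cosh (phi_inv k y) - k)); split.
  - exists (fun t => f' t * / (cosh t - k)); split; [repeat constructor; assumption | reflexivity].
  - intros y; apply (is_derive_ext (fun y => f (phi_inv k y))); [intros; symmetry; apply hu |].
    apply is_derive_Reals, (derivable_pt_lim_comp (phi_inv k) f);
      apply is_derive_Reals; [apply is_derive_phi_inv, hk1 | apply df].
Qed.

Lemma ex_derive_n_cosh_phi_inv k (hk1 : k < 1) n y : ex_derive_n (cosh_phi_inv k) n y.
Proof.
  apply (derive_closed_ex_derive_n _ (derive_closed_hyp_poly_comp_phi_inv k hk1)).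
  exists cosh; split; [constructor | reflexivity].
Qed.

Lemma ball_R_Rabs (x e y : R) : ball x e y <-> Rabs (y - x) < e.
Proof. reflexivity. Qed.

Lemma taylor2_at_right (f : R -> R) (a : R) :
  (forall n x, (n <= 2)%nat -> ex_derive_n f n x) ->
  continuous (Derive_n f 2) a ->
  filterlim
    (fun y => (f y - f a - Derive f a * (y - a) - Derive_n f 2 a * (y - a) ^ 2 / 2) / (y - a) ^ 2)
    (at_right a) (locally 0).
Proof.
  intros hf hc; apply filterlim_locally; intros eps.
  assert (heps : 0 < 2 * eps) by (pose proof (cond_pos eps); lra).
  destruct (proj1 (filterlim_locally _ _) hc (mkposreal _ heps)) as [delta hdelta].
  exists delta; intros y hy hay.
  destruct (Taylor_Lagrange f 1 a y hay) as [z [hz ->]]; [intros; apply hf; assumption |].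
  assert (hz' : Rabs (Derive_n f 2 z - Derive_n f 2 a) < 2 * eps).
  { apply ball_R_Rabs, (hdelta z), ball_R_Rabs.
    change (Rabs (y - a) < delta) in hy; apply Rabs_def2 in hy; apply Rabs_def1; lra. }
  cbn [sum_f_R0]; change (Derive_n f 0 a) with (f a); change (Derive_n f 1 a) with (Derive f a).
  apply ball_R_Rabs.
  replace (_ - 0) with ((Derive_n f 2 z - Derive_n f 2 a) / 2) by (simpl; field; lra).
  apply Rabs_def2 in hz'; apply Rabs_def1; lra.
Qed.

Section HkAtZero.

Variable k : R.
Hypothesis hk1 : k < 1.

Lemma is_derive_cosh_phi_inv y :
  is_derive (cosh_phi_inv k) y (sinh (phi_inv k y) / (cosh (phi_inv k y) - k)).
Proof.
  apply is_derive_Reals, (derivable_pt_lim_comp (phi_inv k) cosh);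
    apply is_derive_Reals; [apply is_derive_phi_inv, hk1 | apply is_derive_cosh].
Qed.

Lemma Derive_cosh_phi_inv_0 : Derive (cosh_phi_inv k) 0 = 0.
Proof.
  rewrite (is_derive_unique _ _ _ (is_derive_cosh_phi_inv 0)), (phi_inv_0 k hk1), sinh_0; lra.
Qed.

Lemma Derive_n_cosh_phi_inv_2_0 : Derive_n (cosh_phi_inv k) 2 0 = / (1 - k) ^ 2.
Proof.
  change (Derive (Derive (cosh_phi_inv k)) 0 = / (1 - k) ^ 2).
  rewrite (Derive_ext _ _ 0 (fun y => is_derive_unique _ _ _ (is_derive_cosh_phi_inv y))).
  pose proof (proj1 (is_derive_Reals _ _ _) (is_derive_phi_inv k hk1 0)) as hT.
  rewrite (phi_inv_0 k hk1), cosh_0 in hT.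
  assert (hs : derivable_pt_lim (fun y => sinh (phi_inv k y)) 0 (cosh 0 * / (1 - k))).
  { apply (derivable_pt_lim_comp (phi_inv k) sinh); [exact hT |].
    rewrite (phi_inv_0 k hk1); apply derivable_pt_lim_sinh. }
  assert (hc : derivable_pt_lim (fun y => cosh (phi_inv k y) - k) 0 (sinh 0 * / (1 - k))).
  { apply (derivable_pt_lim_comp (phi_inv k) (fun t => cosh t - k)); [exact hT |].
    rewrite (phi_inv_0 k hk1); apply is_derive_Reals, is_derive_cosh_sub. }
  pose proof (derivable_pt_lim_div _ _ _ _ _ hs hc) as hdiv; cbv beta in hdiv.
  rewrite (phi_inv_0 k hk1), cosh_0, sinh_0 in hdiv.
  apply is_derive_unique, is_derive_Reals.
  replace (/ (1 - k) ^ 2) with ((1 * / (1 - k) * (1 - k) - 0 * / (1 - k) * 0) / Rsqr (1 - k))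
    by (unfold Rsqr; field; lra).
  apply hdiv; lra.
Qed.

Lemma Hk_expansion_at_0 :
  filterlim (fun x => (Hk k x - 1 - x ^ 2 / (2 * (1 - k) ^ 2)) / (x ^ 2 / (1 - k) ^ 2))
    (at_right 0) (locally 0).
Proof.
  assert (hcont : continuous (Derive_n (cosh_phi_inv k) 2) 0)
    by exact (ex_derive_continuous _ _ (ex_derive_n_cosh_phi_inv k hk1 3 0)).
  pose proof (taylor2_at_right (cosh_phi_inv k) 0
                (fun n x _ => ex_derive_n_cosh_phi_inv k hk1 n x) hcont) as htaylor.
  rewrite Derive_cosh_phi_inv_0, Derive_n_cosh_phi_inv_2_0 in htaylor.
  pose proof (filterlim_comp _ _ _ _ _ _ _ _ htaylor (filterlim_scal_r ((1 - k) ^ 2) (0 : R)))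
    as hlim.
  change (scal ((1 - k) ^ 2) (0 : R)) with ((1 - k) ^ 2 * 0) in hlim; rewrite Rmult_0_r in hlim.
  refine (filterlim_ext_loc _ _ _ hlim).
  exists (mkposreal 1 Rlt_0_1); intros y _ hy.
  rewrite Hk_eq_cosh_phi_inv by (assumption || lra).
  unfold cosh_phi_inv at 2; rewrite (phi_inv_0 k hk1), cosh_0.
  change (scal ?c ?z = ?w) with (c * z = w :> R); field; lra.
Qed.

End HkAtZero.

Section HkAtInfinity.

Variable k : R.
Hypothesis hk0 : 0 <= k.
Hypothesis hk1 : k < 1.

Lemma phi_lt_exp t : 0 <= t -> phi k t < exp t.
Proof.
  intros ht; unfold phi, sinh.
  pose proof (exp_pos t); pose proof (exp_pos (- t)); nra.
Qed.

Lemma exp_le_8_phi t : 8 <= t -> exp t <= 8 * phi k t.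
Proof.
  intros ht; unfold phi, sinh.
  assert (hexp : exp t = exp (t / 2) * exp (t / 2)) by (rewrite <- exp_plus; f_equal; lra).
  pose proof (exp_ineq1_le (t / 2)).
  assert (exp (- t) <= 1) by (rewrite <- exp_0; left; apply exp_increasing; lra).
  nra.
Qed.

Lemma phi_inv_gt_8 y : exp 8 < y -> 8 < phi_inv k y.
Proof.
  intros hy; apply Rnot_le_lt; intros hT.
  pose proof (phi_sub_ge k _ _ hT) as hle; rewrite phi_phi_inv in hle by exact hk1.
  pose proof (phi_lt_exp 8 ltac:(lra)); nra.
Qed.

Lemma ln_div_bounds x : 1 < x -> 0 < ln x / x < 1.
Proof.
  intros hx.
  assert (hln0 : 0 < ln x) by (rewrite <- ln_1; apply ln_increasing; lra).
  assert (hlnx : ln x < x).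
  { rewrite <- (ln_exp x) at 2; apply ln_increasing; [lra |].
    pose proof (exp_ineq1_le x); lra. }
  split; [apply Rdiv_lt_0_compat; lra |].
  apply Rmult_lt_reg_r with x; [lra |]; field_simplify; lra.
Qed.

Lemma Hk_expansion_at_infinity :
  exists M X : R, forall x : R, X < x ->
    Rabs (Hk k x - x - k * ln x - k ^ 2 * ln x / x) <= M.
Proof.
  exists (2 + ln 8), (exp 8); intros x hx.
  pose proof (exp_ineq1_le 8) as h8.
  set (t := phi_inv k x).
  assert (ht : 8 < t) by exact (phi_inv_gt_8 x hx).
  assert (hxt : phi k t = x) by exact (phi_phi_inv k hk1 x).
  rewrite Hk_eq_cosh_phi_inv by (assumption || lra); unfold cosh_phi_inv; fold t.
  assert (hcosh : cosh t = x + exp (- t) + k * t).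
  { rewrite <- cosh_sub_sinh, <- hxt; unfold phi; ring. }
  assert (hlnx_lt : ln x < t).
  { rewrite <- (ln_exp t); apply ln_increasing; [lra |].
    rewrite <- hxt; apply phi_lt_exp; lra. }
  assert (hlnx_ge : t <= ln 8 + ln x).
  { rewrite <- ln_mult, <- (ln_exp t) by lra; apply ln_le; [apply exp_pos |].
    rewrite <- hxt; apply exp_le_8_phi; lra. }
  assert (hln8 : 0 < ln 8) by (rewrite <- ln_1; apply ln_increasing; lra).
  pose proof (ln_div_bounds x ltac:(lra)) as hlnx_div.
  assert (exp (- t) < 1) by (rewrite <- exp_0; apply exp_increasing; lra).
  pose proof (exp_pos (- t)).
  replace (cosh t - x - k * ln x - k ^ 2 * ln x / x)
    with (exp (- t) + k * (t - ln x) - k ^ 2 * (ln x / x)) by (rewrite hcosh; field; lra).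
  apply Rabs_le; split; nra.
Qed.

End HkAtInfinity.

Theorem lemma2p10 (k : R) (hk0 : 0 < k) (hk1 : k < 1) :
  (* smoothness of H_kappa on [0,oo): it is the restriction of a C^oo function on R *)
  (exists f : R -> R,
      (forall (n : nat) (x : R), ex_derive_n f n x) /\
      (forall x : R, 0 <= x -> f x = Hk k x)) /\
  (* x -> 0+ : H(x) = 1 + x^2/(2(1-k)^2) + o(x^2/(1-k)^2) *)
  filterlim
    (fun x => (Hk k x - 1 - x ^ 2 / (2 * (1 - k) ^ 2)) / (x ^ 2 / (1 - k) ^ 2))
    (at_right 0) (locally 0) /\
  (* x -> +oo : H(x) = x + k ln x + k^2 ln x / x + O(1) *)
  (exists M X : R, forall x : R, X < x ->
      Rabs (Hk k x - x - k * ln x - k ^ 2 * ln x / x) <= M).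
Proof.
  split; [| split].
  - exists (cosh_phi_inv k); split.
    + exact (ex_derive_n_cosh_phi_inv k hk1).
    + intros x hx; symmetry; exact (Hk_eq_cosh_phi_inv k hk1 x hx).
  - exact (Hk_expansion_at_0 k hk1).
  - exact (Hk_expansion_at_infinity k (Rlt_le _ _ hk0) hk1).
Qed.
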